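(* Let $\mathcal{H}$ be a real Hilbert space, let $A\colon \mathcal{H}\rightrightarrows\mathcal{H}$ be maximally monotone and $B\colon\mathcal{H}\to\mathcal{H}$ monotone. Let $\alpha\geq0$ and $\beta,\lambda>0$, put $B':=B-\frac{\alpha}{\lambda}I$ and suppose $B'$ is $L'$-Lipschitz. Let $x\in (A+B)^{-1}(0)$ and, given $x_0,x_{-1}\in\mathcal{H}$, let $$z_{k+1} := J_{\lambda A}\Bigl( x_k - \lambda B(x_k) - \frac{\lambda}{\beta}(B'(x_k)- B'(x_{k-1})) \Bigr),\qquad x_{k+1} := (1-\beta) x_k + \beta z_{k+1}\quad\forall k\in\mathbb{N}.$$ Define $b_k:=2\lambda\langle B(x)-B(x_k),x-x_{k}\rangle$ (so $b_k\geq0$). Then for all $k\in\mathbb{N}$, $$(1-\alpha)\|x_{k+1}-x\|^2 +2\lambda\langle B'(x_{k+1})-B'(x_k),x-x_{k+1}\rangle + b_{k+1} \leq (1-\alpha)\|x_k-x\|^2 + 2\lambda\langle B'(x_k)-B'(x_{k-1}),x-x_k\rangle+ b_k +\frac{\lambda L'}{\beta}\|x_k-x_{k-1}\|^2 -\left(\frac{2-\beta-\lambda L'}{\beta}-\alpha \right) \|x_{k+1}-x_k\|^2.$$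
   Context: $J_{\lambda A}:=(I+\lambda A)^{-1}$ denotes the resolvent; $I$ is the identity. *)

From HB Require Import structures.
From mathcomp Require Import all_boot all_order all_algebra.
From mathcomp Require Import all_classical all_reals all_analysis.
Set Implicit Arguments. Unset Strict Implicit. Unset Printing Implicit Defensive.
Import Order.TTheory GRing.Theory Num.Theory.
Import numFieldNormedType.Exports.
Local Open Scope classical_set_scope.
Local Open Scope ring_scope.

(* A real Hilbert space: a complete normed space (over a realType R) whose
   norm is induced by the inner product [ip]: [ip] is symmetric, bilinear
   (linear in the first argument + symmetry) and [ip x x = `|x|^2]. *)
Definition is_inner_product (R : realType) (V : completeNormedModType R)
  (ip : V -> V -> R) : Prop :=
  (forall x y, ip x y = ip y x) /\
  (forall a x y z, ip (a *: x + y) z = a * ip x z + ip y z) /\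
  (forall x, ip x x = `|x| ^+ 2).

(* set-valued operators V ⇉ V are given by their graph: A x u <-> u ∈ A x *)
Definition monotone_op (R : realType) (V : completeNormedModType R)
  (ip : V -> V -> R) (A : V -> set V) : Prop :=
  forall x y u v, A x u -> A y v -> 0 <= ip (u - v) (x - y).

Definition maximally_monotone (R : realType) (V : completeNormedModType R)
  (ip : V -> V -> R) (A : V -> set V) : Prop :=
  monotone_op ip A /\
  forall A' : V -> set V, monotone_op ip A' ->
    (forall x u, A x u -> A' x u) -> forall x u, A' x u -> A x u.

Definition monotone_fun (R : realType) (V : completeNormedModType R)
  (ip : V -> V -> R) (B : V -> V) : Prop :=
  forall x y, 0 <= ip (B x - B y) (x - y).

Definition lipschitz_with (R : realType) (V : completeNormedModType R)
  (L : R) (f : V -> V) : Prop :=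
  0 <= L /\ forall x y, `|f x - f y| <= L * `|x - y|.

(* resolvent J_{lam A} = (I + lam A)^{-1}, as a set-valued operator:
   z ∈ J_{lam A} w  <->  w ∈ z + lam A z *)
Definition resolvent (R : realType) (V : completeNormedModType R)
  (lam : R) (A : V -> set V) (w : V) : set V :=
  [set z | exists u, A z u /\ w = z + lam *: u].

(* previous iterate: x_{k-1}, with x_{-1} := xm1 *)
Definition prev_iter (V : Type) (x : nat -> V) (xm1 : V) (k : nat) : V :=
  if k is k'.+1 then x k' else xm1.

(* The right side minus the left side is exactly 2 beta, 2 lam beta and
   lam / beta times three nonnegative quantities.  The resolvent step puts
   (x_k - z_{k+1})/lam - B x_k - (B' x_k - B' x_{k-1})/beta in A z_{k+1} and
   -B x is in A x, so monotonicity of A gives the first; monotonicity of B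
   gives <B x_k - B x, x_k - x> >= 0; and Lipschitz continuity of B' with
   Young's inequality controls <B' x_k - B' x_{k-1}, x_{k+1} - x_k>. *)

From HB Require Import structures.
From mathcomp Require Import all_boot all_order all_algebra.
From mathcomp Require Import all_classical all_reals all_analysis.
From mathcomp Require Import ring lra.

Set Implicit Arguments.
Unset Strict Implicit.
Unset Printing Implicit Defensive.
Import Order.TTheory GRing.Theory Num.Theory.
Import numFieldNormedType.Exports.
Local Open Scope classical_set_scope.
Local Open Scope ring_scope.

Section InnerProduct.
Variables (R : realType) (V : completeNormedModType R) (ip : V -> V -> R).
Hypothesis ip_inner : is_inner_product ip.

Lemma ipC x y : ip x y = ip y x. Proof. by case: ip_inner. Qed.

Lemma ipDl x y z : ip (x + y) z = ip x z + ip y z.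
Proof. by case: ip_inner => _ [ipZDl _]; rewrite -{1}[x]scale1r ipZDl mul1r. Qed.

Lemma ip0l z : ip 0 z = 0.
Proof. by apply: (addrI (ip 0 z)); rewrite -ipDl !addr0. Qed.

Lemma ipZl a x z : ip (a *: x) z = a * ip x z.
Proof. by case: ip_inner => _ [ipZDl _]; rewrite -[a *: x]addr0 ipZDl ip0l addr0. Qed.

Lemma ipNl x z : ip (- x) z = - ip x z.
Proof. by rewrite -scaleN1r ipZl mulN1r. Qed.

Lemma ipDr x y z : ip z (x + y) = ip z x + ip z y.
Proof. by rewrite ipC ipDl !(ipC z). Qed.

Lemma ipZr a x z : ip z (a *: x) = a * ip z x.
Proof. by rewrite ipC ipZl ipC. Qed.

Lemma ipNr x z : ip z (- x) = - ip z x.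
Proof. by rewrite ipC ipNl ipC. Qed.

Lemma ipxx x : ip x x = `|x| ^+ 2.
Proof. by case: ip_inner => _ [_ ->]. Qed.

Lemma ip_lipschitz_young (L : R) (D e f : V) : 0 <= L -> `|D| <= L * `|f| ->
  0 <= 2 * ip D e + L * (`|e| ^+ 2 + `|f| ^+ 2).
Proof.
move=> L_ge0; have [->|L_neq0] := eqVneq L 0.
  by rewrite mul0r normr_le0 => /eqP ->; rewrite ip0l mulr0 mul0r addr0.
move=> normD; have L_gt0 : 0 < L by rewrite lt_def L_neq0.
have sq_ge0 : 0 <= `|D + L *: e| ^+ 2 by rewrite exprn_ge0.
rewrite -ipxx !(ipDl, ipDr, ipZl, ipZr) (ipC e D) !ipxx in sq_ge0.
have normD2 : `|D| ^+ 2 <= (L * `|f|) ^+ 2 by rewrite lerXn2r ?nnegrE ?mulr_ge0.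
rewrite -(pmulr_rge0 _ L_gt0); nra.
Qed.

Lemma resolvent_monotone (A : V -> set V) (lam : R) (w z y v : V) :
  monotone_op ip A -> 0 < lam -> z \in resolvent lam A w -> A y v ->
  0 <= ip (w - z - lam *: v) (z - y).
Proof.
move=> monoA lam_gt0; rewrite inE => -[u [Azu ->]] Ayv.
by rewrite [z + _]addrC addrK -scalerBr ipZl mulr_ge0 ?(ltW lam_gt0) ?monoA.
Qed.

(* In the application e = x_k - x, d = x_{k+1} - x_k, f = x_k - x_{k-1},
   g = B x_k - B x, h = B x_{k+1} - B x_k and D = B' x_k - B' x_{k-1};
   the terms in h cancel. *)
Lemma frb_estimate_diff (alpha beta lam L : R) (e d f g h D : V) :
  0 < beta -> 0 < lam -> 0 <= L -> `|D| <= L * `|f| ->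
  0 <= ip (- (beta^-1 *: d + lam *: g + (lam / beta) *: D)) (e + beta^-1 *: d) ->
  0 <= ip g e ->
  (1 - alpha) * `|d + e| ^+ 2 + 2 * lam * ip (h - (alpha / lam) *: d) (- (d + e))
    + 2 * lam * ip (- (g + h)) (- (d + e))
  <= (1 - alpha) * `|e| ^+ 2 + 2 * lam * ip D (- e) + 2 * lam * ip (- g) (- e)
    + (lam * L / beta) * `|f| ^+ 2 - ((2 - beta - lam * L) / beta - alpha) * `|d| ^+ 2.
Proof.
move=> beta_gt0 lam_gt0 L_ge0 normD monoA monoB.
have young := ip_lipschitz_young d L_ge0 normD.
rewrite -subr_ge0 (_ : _ - _ =
    2 * beta * ip (- (beta^-1 *: d + lam *: g + (lam / beta) *: D)) (e + beta^-1 *: d)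
    + 2 * lam * beta * ip g e
    + lam / beta * (2 * ip D d + L * (`|d| ^+ 2 + `|f| ^+ 2))).
  by rewrite !addr_ge0 // ?mulr_ge0 ?divr_ge0 ?invr_ge0 // ltW.
rewrite -!ipxx !(ipDl, ipDr, ipNl, ipNr, ipZl, ipZr) (ipC e d).
by field; rewrite !gt_eqF.
Qed.

Lemma relaxed_frb_step (A : V -> set V) (B B' : V -> V) (alpha beta lam L : R)
    (xs xp x y z : V) :
  (forall v, B' v = B v - (alpha / lam) *: v) ->
  monotone_op ip A -> monotone_fun ip B -> 0 < beta -> 0 < lam ->
  lipschitz_with L B' -> A xs (- B xs) ->
  z \in resolvent lam A (x - lam *: B x - (lam / beta) *: (B' x - B' xp)) ->
  y = (1 - beta) *: x + beta *: z ->
  (1 - alpha) * `|y - xs| ^+ 2 + 2 * lam * ip (B' y - B' x) (xs - y)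
    + 2 * lam * ip (B xs - B y) (xs - y)
  <= (1 - alpha) * `|x - xs| ^+ 2 + 2 * lam * ip (B' x - B' xp) (xs - x)
    + 2 * lam * ip (B xs - B x) (xs - x) + (lam * L / beta) * `|x - xp| ^+ 2
    - ((2 - beta - lam * L) / beta - alpha) * `|y - x| ^+ 2.
Proof.
move=> B'_def monoA monoB beta_gt0 lam_gt0 [L_ge0 lipB'] Axs z_res y_def.
have resA := resolvent_monotone monoA lam_gt0 z_res Axs.
have d_def : y - x = beta *: (z - x).
  by rewrite y_def scalerBl scale1r scalerBr addrAC [x - _ - x]addrAC subrr add0r addrC.
have z_def : z = x + beta^-1 *: (y - x).
  by rewrite d_def scalerA mulVf ?gt_eqF // scale1r subrKC.
have y_xs : y - xs = (y - x) + (x - xs) by rewrite addrA subrK.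
have By_Bxs : B y - B xs = (B x - B xs) + (B y - B x).
  by rewrite [RHS]addrC addrA subrK.
have B'y_B'x : B' y - B' x = (B y - B x) - (alpha / lam) *: (y - x).
  by rewrite !B'_def scalerBr !opprB addrACA [RHS]addrACA (addrC (- B x)).
have z_xs : z - xs = (x - xs) + beta^-1 *: (y - x) by rewrite z_def addrAC.
have res_arg : x - lam *: B x - (lam / beta) *: (B' x - B' xp) - z - lam *: - B xs
    = - (beta^-1 *: (y - x) + lam *: (B x - B xs) + (lam / beta) *: (B' x - B' xp)).
  rewrite z_def scalerN opprK opprD addrA [x - _ - _ - x]addrAC [x - _ - x]addrAC.
  rewrite subrr add0r (scalerBr lam) !opprD opprK [- (_ *: (y - x)) + _]addrA.
  by rewrite [- _ - _ - _]addrAC [LHS]addrAC (addrC (- (lam *: B x))).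
rewrite res_arg z_xs in resA.
rewrite -[xs - y]opprB -[xs - x]opprB -[B xs - B y]opprB -[B xs - B x]opprB.
rewrite y_xs By_Bxs B'y_B'x.
exact: frb_estimate_diff (lipB' x xp) resA (monoB x xs).
Qed.

End InnerProduct.

Theorem lemma4p2 (R : realType) (V : completeNormedModType R)
  (ip : V -> V -> R) (A : V -> set V) (B : V -> V)
  (alpha beta lam L' : R) (xs xm1 : V) (x z : nat -> V) :
  is_inner_product ip ->
  maximally_monotone ip A ->
  monotone_fun ip B ->
  0 <= alpha -> 0 < beta -> 0 < lam ->
  lipschitz_with L' (fun y => B y - (alpha / lam) *: y) ->
  (exists u, A xs u /\ u + B xs = 0) ->
  (forall k, z k.+1 \in resolvent lam A
     (x k - lam *: B (x k)
      - (lam / beta) *: ((B (x k) - (alpha / lam) *: x k)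
           - (B (prev_iter x xm1 k) - (alpha / lam) *: prev_iter x xm1 k)))) ->
  (forall k, x k.+1 = (1 - beta) *: x k + beta *: z k.+1) ->
  let B' := fun y => B y - (alpha / lam) *: y in
  let b := fun k => 2 * lam * ip (B xs - B (x k)) (xs - x k) in
  forall k,
    (1 - alpha) * `|x k.+1 - xs| ^+ 2
      + 2 * lam * ip (B' (x k.+1) - B' (x k)) (xs - x k.+1) + b k.+1
    <= (1 - alpha) * `|x k - xs| ^+ 2
      + 2 * lam * ip (B' (x k) - B' (prev_iter x xm1 k)) (xs - x k) + b k
      + (lam * L' / beta) * `|x k - prev_iter x xm1 k| ^+ 2
      - ((2 - beta - lam * L') / beta - alpha) * `|x k.+1 - x k| ^+ 2.
Proof.
move=> ip_inner [monoA _] monoB _ beta_gt0 lam_gt0 lipB' [u [Axs_u u_zero]].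
move=> z_res x_next B' b k.
have Axs : A xs (- B xs) by rewrite -(addrK (B xs) u) u_zero sub0r in Axs_u.
exact: (relaxed_frb_step ip_inner (B' := B') (fun _ => erefl) monoA monoB
  beta_gt0 lam_gt0 lipB' Axs (z_res k) (x_next k)).
Qed.
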